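(* Let $\mathbb C$ be a pointed variety of universal algebras, $A$ an algebra in $\mathbb C$, and $X,Y$ subalgebras of $A$. Then (a) $[X,Y]_{\mathbb C,A}\subseteq [X,Y]_{A\mid 1}$. (b) If $A$ is the free algebra in $\mathbb C$ on a set $S$, and $X$ and $Y$ are the subalgebras freely generated by subsets $P$ and $Q$ of $S$ respectively, with $P\cap Q=\emptyset$, then $[X,Y]_{\mathbb C,A}=[X,Y]_{A\mid 1}$.
   Context: In a pointed variety, $0$ denotes the unique constant (whose value is a one-element subalgebra). A term $t(\mathbf w_1,\dots,\mathbf w_k,\mathbf x_1,\dots,\mathbf x_m,\mathbf y_1,\dots,\mathbf y_n)$ of $\mathbb C$, with $\{\mathbf x_1,\dots,\mathbf x_m\}$ and $\{\mathbf y_1,\dots,\mathbf y_n\}$ disjoint sets of variables, is a commutator term in $(\mathbf x_1,\dots,\mathbf x_m)$ and $(\mathbf y_1,\dots,\mathbf y_n)$ if the identities $t(\mathbf w_1,\dots,\mathbf w_k,0,\dots,0,\mathbf y_1,\dots,\mathbf y_n)=0=t(\mathbf w_1,\dots,\mathbf w_k,\mathbf x_1,\dots,\mathbf x_m,0,\dots,0)$ hold in $\mathbb C$. $[X,Y]_{\mathbb C,A}$ is the set of all elements $t_A(w_1,\dots,w_k,x_1,\dots,x_m,y_1,\dots,y_n)$ of $A$ where $t$ is such a commutator term, $w_i\in A$, $x_i\in X$, $y_i\in Y$. $[X,Y]_{A\mid 1}$ is the image under the homomorphism $[1_A,x,y]\colon A+X+Y\to A$ (with $x,y$ the inclusions)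 of the kernel (preimage of $0$) of the homomorphism $\langle[\iota_1,\iota_2,0],[\iota_1,0,\iota_2]\rangle\colon A+X+Y\to (A+X)\times_A(A+Y)$, where $\iota_i$ are coproduct injections and $(A+X)\times_A(A+Y)$ is the pullback of $[1,0]\colon A+X\to A$ and $[1,0]\colon A+Y\to A$. *)

From mathcomp Require Import all_boot.
Set Implicit Arguments. Unset Strict Implicit. Unset Printing Implicit Defensive.

Section UA.
Variables (O : Type) (ar : O -> nat).

Inductive term (V : Type) : Type :=
| Var of V
| App (o : O) of ('I_(ar o) -> term V).

Record algebra := Algebra {
  carrier :> Type;
  op : forall o : O, ('I_(ar o) -> carrier) -> carrier }.

Arguments op {a} o _.

Fixpoint eval (A : algebra) (V : Type) (env : V -> A) (t : term V) : A :=
  match t with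
  | Var v => env v
  | App o ts => op o (fun i => eval env (ts i))
  end.

(* A variety C is presented by a set E of identities (pairs of terms in
   variables indexed by nat); A is in C iff A satisfies every identity of E. *)
Definition models (E : term nat -> term nat -> Prop) (A : algebra) : Prop :=
  forall s t, E s t -> forall env : nat -> A, eval env s = eval env t.

Definition is_hom (A B : algebra) (f : A -> B) : Prop :=
  forall o (args : 'I_(ar o) -> A), f (op o args) = op o (fun i => f (args i)).

Definition void_env (A : algebra) : void -> A := fun v => match v with end.
Definition zero (z : term void) (A : algebra) : A := eval (@void_env A) z.

(* C is pointed, with constant 0 given by the closed term z: in every algebra
   of C all closed terms (constants) coincide with 0. *)
Definition pointed (E : term nat -> term nat -> Prop) (z : term void) : Prop :=
  forall A : algebra, models E A ->
    forall t : term void, eval (@void_env A) t = zero z A.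

Definition is_subalg (A : algebra) (X : A -> Prop) : Prop :=
  forall o (args : 'I_(ar o) -> A), (forall i, X (args i)) -> X (op o args).

Definition subalg (A : algebra) (X : A -> Prop) (HX : is_subalg X) : algebra :=
  @Algebra {a : A | X a}
    (fun o args => exist _ (op o (fun i => sval (args i)))
                          (HX o _ (fun i => svalP (args i)))).

Definition generated_by (S : Type) (A : algebra) (eta : S -> A) (P : S -> Prop)
  (a : A) : Prop :=
  forall Z : A -> Prop, is_subalg Z ->
    (forall s, P s -> Z (eta s)) -> Z a.

Definition is_free (E : term nat -> term nat -> Prop) (S : Type) (A : algebra)
  (eta : S -> A) : Prop :=
  models E A /\
  forall B : algebra, models E B -> forall g : S -> B,
    exists h : A -> B, [/\ is_hom h, (forall s, h (eta s) = g s) &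
      forall h' : A -> B, is_hom h' -> (forall s, h' (eta s) = g s) ->
        forall a, h' a = h a].

Definition is_coprod2 (E : term nat -> term nat -> Prop) (A1 A2 K : algebra)
  (i1 : A1 -> K) (i2 : A2 -> K) : Prop :=
  [/\ models E K, is_hom i1, is_hom i2 &
  forall B : algebra, models E B -> forall (f1 : A1 -> B) (f2 : A2 -> B),
    is_hom f1 -> is_hom f2 ->
    exists h : K -> B, [/\ is_hom h, (forall x, h (i1 x) = f1 x),
      (forall x, h (i2 x) = f2 x) &
      forall h' : K -> B, is_hom h' -> (forall x, h' (i1 x) = f1 x) ->
        (forall x, h' (i2 x) = f2 x) -> forall k, h' k = h k]].

Definition is_coprod3 (E : term nat -> term nat -> Prop) (A1 A2 A3 K : algebra)
  (i1 : A1 -> K) (i2 : A2 -> K) (i3 : A3 -> K) : Prop :=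
  [/\ models E K, is_hom i1, is_hom i2, is_hom i3 &
  forall B : algebra, models E B ->
    forall (f1 : A1 -> B) (f2 : A2 -> B) (f3 : A3 -> B),
    is_hom f1 -> is_hom f2 -> is_hom f3 ->
    exists h : K -> B, [/\ is_hom h, (forall x, h (i1 x) = f1 x),
      (forall x, h (i2 x) = f2 x), (forall x, h (i3 x) = f3 x) &
      forall h' : K -> B, is_hom h' -> (forall x, h' (i1 x) = f1 x) ->
        (forall x, h' (i2 x) = f2 x) -> (forall x, h' (i3 x) = f3 x) ->
        forall k, h' k = h k]].

Inductive cvar := Wv of nat | Xv of nat | Yv of nat.

(* t is a commutator term in the x's and y's: the identities
   t(w,0,y) = 0 = t(w,x,0) hold in C. *)
Definition is_commutator_term (E : term nat -> term nat -> Prop)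
  (z : term void) (t : term cvar) : Prop :=
  forall B : algebra, models E B -> forall env : cvar -> B,
    ((forall n, env (Xv n) = zero z B) -> eval env t = zero z B) /\
    ((forall n, env (Yv n) = zero z B) -> eval env t = zero z B).

Definition commC (E : term nat -> term nat -> Prop) (z : term void)
  (A : algebra) (X Y : A -> Prop) (a : A) : Prop :=
  exists (t : term cvar) (env : cvar -> A),
    [/\ is_commutator_term E z t, (forall n, X (env (Xv n))),
        (forall n, Y (env (Yv n))) & a = eval env t].

(* [X,Y]_{A|1}, computed w.r.t. given coproducts K = A+X+Y (injections
   kA,kX,kY), L = A+X (lA,lX), M = A+Y (mA,mY).  An element k of K lies in
   the kernel of <[i1,i2,0],[i1,0,i2]> : K -> L x_A M iff both components
   are 0 (the zero of the pullback is (0,0)); [1_A,x,y] : K -> A is the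
   copairing of the identity and the two inclusions. The copairings exist
   and are unique by the coproduct property, so "for every hom satisfying
   the defining equations" denotes that unique map. *)
Definition comm1 (z : term void) (A : algebra) (X Y : A -> Prop)
  (HX : is_subalg X) (HY : is_subalg Y)
  (K : algebra) (kA : A -> K) (kX : subalg HX -> K) (kY : subalg HY -> K)
  (L : algebra) (lA : A -> L) (lX : subalg HX -> L)
  (M : algebra) (mA : A -> M) (mY : subalg HY -> M) (a : A) : Prop :=
  exists k : K,
    [/\ (forall f : K -> L, is_hom f -> (forall x, f (kA x) = lA x) ->
           (forall x, f (kX x) = lX x) -> (forall y, f (kY y) = zero z L) ->
           f k = zero z L),
        (forall g : K -> M, is_hom g -> (forall x, g (kA x) = mA x) ->
           (forall x, g (kX x) = zero z M) -> (forall y, g (kY y) = mY y) ->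
           g k = zero z M) &
        (forall h : K -> A, is_hom h -> (forall x, h (kA x) = x) ->
           (forall x, h (kX x) = sval x) -> (forall y, h (kY y) = sval y) ->
           h k = a)].

End UA.

(* For (a), a commutator term evaluated at the inclusions of its arguments
   into A + X + Y lies in both kernels, and [1_A,x,y] sends it to the given
   element.  For (b), A + X + Y is generated by the images of the free
   generators of A, X and Y, so an element of the kernel is a term in three
   sorts of variables; renaming them into w's, x's and y's gives a commutator
   term, because every valuation killing the x's (the y's) factors through
   [i1,0,i2] : A + X + Y -> A + Y (through [i1,i2,0]), again by freeness. *)
From mathcomp Require Import all_boot.
From Stdlib Require Import ClassicalEpsilon ProofIrrelevance FunctionalExtensionality.
From Stdlib Require List.
Set Implicit Arguments. Unset Strict Implicit. Unset Printing Implicit Defensive.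

Section Signature.
Variables (O : Type) (ar : O -> nat).
Local Notation term := (term ar).
Local Notation algebra := (algebra ar).

Lemma eq_eval (A : algebra) V (e1 e2 : V -> A) (t : term V) :
  (forall v, e1 v = e2 v) -> eval e1 t = eval e2 t.
Proof.
move=> e12; elim: t => [v|o ts IH] /=; first exact: e12.
by congr op; apply: functional_extensionality => i; apply: IH.
Qed.

Lemma hom_eval (A B : algebra) (f : A -> B) V (e : V -> A) (t : term V) :
  is_hom f -> f (eval e t) = eval (fun v => f (e v)) t.
Proof.
move=> hf; elim: t => [v|o ts IH] //=.
by rewrite hf; congr op; apply: functional_extensionality => i; apply: IH.
Qed.

Fixpoint rename V W (r : V -> W) (t : term V) : term W :=
  match t with
  | Var v => Var ar (r v)
  | App o ts => App (fun i => rename r (ts i))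
  end.

Lemma eval_rename (A : algebra) V W (r : V -> W) (e : W -> A) (t : term V) :
  eval e (rename r t) = eval (fun v => e (r v)) t.
Proof.
elim: t => [v|o ts IH] //=.
by congr op; apply: functional_extensionality => i; apply: IH.
Qed.

Fixpoint vars V (t : term V) : list V :=
  match t with
  | Var v => v :: nil
  | App o ts => List.flat_map (fun i => vars (ts i)) (enum 'I_(ar o))
  end.

Lemma mem_In (T : eqType) (x : T) (s : seq T) : x \in s -> List.In x s.
Proof.
elim: s => [|y s IH] //=; rewrite in_cons => /orP [/eqP ->|xs]; first by left.
by right; apply: IH.
Qed.

Lemma eq_eval_in (A : algebra) V (e1 e2 : V -> A) (t : term V) :
  (forall v, List.In v (vars t) -> e1 v = e2 v) -> eval e1 t = eval e2 t.
Proof.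
elim: t => [v|o ts IH] e12 /=; first by apply: e12; left.
congr op; apply: functional_extensionality => i; apply: IH => v vt; apply: e12.
by apply/List.in_flat_map; exists i; split=> //; apply/mem_In/mem_enum.
Qed.

Lemma hom_zero z (A B : algebra) (f : A -> B) : is_hom f -> f (zero z A) = zero z B.
Proof. by move=> hf; rewrite /zero hom_eval //; apply: eq_eval; case. Qed.

Lemma hom_cst_zero E z (A B : algebra) :
  pointed E z -> models E B -> is_hom (fun _ : A => zero z B).
Proof. by move=> pz HB o args; symmetry; apply: (pz B HB (App (o := o) (fun _ => z))). Qed.

Lemma sval_inj (T : Type) (X : T -> Prop) (x y : {a | X a}) :
  sval x = sval y -> x = y.
Proof. by case: x => a Ha; case: y => b Hb /= ab; apply: subset_eq_compat. Qed.

Lemma models_subalg E (A : algebra) (X : A -> Prop) (HX : is_subalg X) :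
  models E A -> models E (subalg HX).
Proof.
move=> HA s t Est env; apply: sval_inj.
by rewrite !(@hom_eval (subalg HX) A (@sval _ _)) //; apply: HA.
Qed.

Lemma subalg_closed_term (A : algebra) (X : A -> Prop) (t : term void) :
  is_subalg X -> X (eval (@void_env _ ar A) t).
Proof. by move=> HX; elim: t => [[]|o ts IH] /=; apply: HX. Qed.

Lemma is_subalg_preim (A B : algebra) (f : A -> B) (R : B -> Prop) :
  is_hom f -> is_subalg R -> is_subalg (fun a => R (f a)).
Proof. by move=> hf HR o args Rargs; rewrite hf; apply: HR. Qed.

Definition range (A : algebra) V (e : V -> A) (a : A) : Prop :=
  exists t : term V, eval e t = a.

Lemma is_subalg_range (A : algebra) V (e : V -> A) : is_subalg (range e).
Proof.
move=> o args Rargs; pose ts i := proj1_sig (constructive_indefinite_description _ (Rargs i)).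
exists (App ts) => /=; congr op; apply: functional_extensionality => i.
exact: proj2_sig (constructive_indefinite_description _ (Rargs i)).
Qed.

(* The corestriction onto R followed by the inclusion fixes the generators,
   hence is the identity by uniqueness. *)
Lemma free_subalg_full E S (A : algebra) (eta : S -> A) (R : A -> Prop) :
  is_free E eta -> is_subalg R -> (forall s, R (eta s)) -> forall a, R a.
Proof.
case=> HA univ HR Reta a.
have [j [hj ej _]] := univ _ (models_subalg (HX := HR) HA) (fun s => exist _ _ (Reta s)).
have [h0 [_ _ uniq]] := univ _ HA eta.
have idE : a = h0 a := uniq id (fun _ _ => erefl) (fun _ => erefl) a.
have jE : sval (j a) = h0 a := uniq (fun x => sval (j x))
  (fun o args => f_equal sval (hj o args)) (fun s => f_equal sval (ej s)) a.
suff -> : a = sval (j a) by apply: svalP.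
by rewrite jE.
Qed.

Lemma coprod3_subalg_full E (A1 A2 A3 K : algebra)
    (k1 : A1 -> K) (k2 : A2 -> K) (k3 : A3 -> K) (R : K -> Prop) :
  is_coprod3 E k1 k2 k3 -> is_subalg R ->
  (forall x, R (k1 x)) -> (forall x, R (k2 x)) -> (forall x, R (k3 x)) ->
  forall k, R k.
Proof.
case=> HK h1 h2 h3 univ HR R1 R2 R3 k.
have corestrict (B : algebra) (f : B -> K) (Rf : forall x, R (f x)) :
    is_hom f -> @is_hom _ ar B (subalg HR) (fun x => exist _ (f x) (Rf x)).
  by move=> hf o args; apply: sval_inj; apply: hf.
have [j [hj ej1 ej2 ej3 _]] := univ _ (models_subalg (HX := HR) HK) _ _ _
  (corestrict _ _ R1 h1) (corestrict _ _ R2 h2) (corestrict _ _ R3 h3).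
have [h0 [_ _ _ _ uniq]] := univ _ HK k1 k2 k3 h1 h2 h3.
have idE : k = h0 k :=
  uniq id (fun _ _ => erefl) (fun _ => erefl) (fun _ => erefl) (fun _ => erefl) k.
have jE : sval (j k) = h0 k := uniq (fun x => sval (j x))
  (fun o args => f_equal sval (hj o args)) (fun x => f_equal sval (ej1 x))
  (fun x => f_equal sval (ej2 x)) (fun x => f_equal sval (ej3 x)) k.
suff -> : k = sval (j k) by apply: svalP.
by rewrite jE.
Qed.

Lemma free_range E S (A : algebra) (eta : S -> A) :
  is_free E eta -> forall a, range eta a.
Proof.
move=> Hfree; apply: (free_subalg_full Hfree (@is_subalg_range A S eta)).
by move=> s; exists (Var ar s).
Qed.

Lemma free_hom_ext E S (A B : algebra) (eta : S -> A) (g : S -> B) :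
  is_free E eta -> models E B ->
  exists psi : A -> B, is_hom psi /\ forall s, psi (eta s) = g s.
Proof. by case=> _ univ HB; have [h [? ? _]] := univ B HB g; exists h. Qed.

Lemma generated_by_gen S (A : algebra) (eta : S -> A) (P : S -> Prop) s :
  P s -> generated_by eta P (eta s).
Proof. by move=> Ps Z _; apply. Qed.

Lemma generated_subalg_full S (A : algebra) (eta : S -> A) (P : S -> Prop)
    (X : A -> Prop) (HX : is_subalg X) (W : subalg HX -> Prop) :
  (forall a, X a <-> generated_by eta P a) -> is_subalg W ->
  (forall s (Xs : X (eta s)), P s -> W (exist _ _ Xs)) -> forall x, W x.
Proof.
move=> HXg HW Weta [a Xa].
pose Z b := X b /\ forall Xb : X b, W (exist _ b Xb).
suff [_] : Z a by apply.
apply: (proj1 (HXg a) Xa) => [o args Zargs|s Ps].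
  have Xargs i : X (args i) by case: (Zargs i).
  split=> [|Xop]; first exact: (HX _ _ Xargs).
  have -> : exist X (op args) Xop =
      @op _ _ (subalg HX) o (fun i => exist _ (args i) (Xargs i)) by apply: sval_inj.
  by apply: HW => i; case: (Zargs i).
have Xs : X (eta s) by apply/HXg; apply: generated_by_gen.
by split=> // Xs'; apply: Weta.
Qed.

Lemma free_coprod2_lift E S (A : algebra) (eta : S -> A) (R : S -> Prop)
    (Y : A -> Prop) (HY : is_subalg Y) (N : algebra)
    (mA : A -> N) (mY : subalg HY -> N) :
  is_free E eta -> is_coprod2 E mA mY ->
  forall B : algebra, models E B -> forall (gA : S -> B) (gR : {s | R s} -> B),
  exists phi : N -> B, [/\ is_hom phi, (forall s, phi (mA (eta s)) = gA s) &
    forall r (Yr : Y (eta (sval r))), phi (mY (exist _ _ Yr)) = gR r].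
Proof.
move=> Hfree [_ _ _ univ] B HB gA gR.
pose gR' s := if excluded_middle_informative (R s) is left Rs
              then gR (exist _ s Rs) else gA s.
have [psiA [hA eA]] := free_hom_ext gA Hfree HB.
have [psiR [hR eR]] := free_hom_ext gR' Hfree HB.
have hRY : @is_hom _ ar (subalg HY) B (fun y => psiR (sval y)).
  by move=> o args; apply: hR.
have [phi [hphi e1 e2 _]] := univ B HB psiA _ hA hRY.
exists phi; split=> // [s|[s Rs] Yr]; first by rewrite e1.
rewrite e2 /= eR /gR'; case: excluded_middle_informative => [Rs'|] //.
by rewrite (proof_irrelevance _ Rs' Rs).
Qed.

Lemma commC_sub_comm1 E z (A : algebra) (X Y : A -> Prop)
    (HX : is_subalg X) (HY : is_subalg Y)
    (K : algebra) (kA : A -> K) (kX : subalg HX -> K) (kY : subalg HY -> K)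
    (L : algebra) (lA : A -> L) (lX : subalg HX -> L)
    (M : algebra) (mA : A -> M) (mY : subalg HY -> M) :
  is_coprod2 E lA lX -> is_coprod2 E mA mY ->
  forall a, commC E z X Y a -> comm1 z kA kX kY lA lX mA mY a.
Proof.
move=> [HL _ _ _] [HM _ _ _] a [t [env [tcomm Xenv Yenv ->]]].
pose e c : K := match c with
  | Wv n => kA (env (Wv n))
  | Xv n => kX (exist _ _ (Xenv n))
  | Yv n => kY (exist _ _ (Yenv n)) end.
exists (eval e t); split=> [f hf _ _ fY|g hg _ gX _|h hh hA hX hY]; rewrite hom_eval //.
- by apply: (proj2 (tcomm L HL _)) => n /=.
- by apply: (proj1 (tcomm M HM _)) => n /=.
- by apply: eq_eval => -[n|n|n] /=; rewrite ?hA ?hX ?hY.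
Qed.

Definition peqb T (x y : T) : bool :=
  if excluded_middle_informative (x = y) then true else false.

Definition position T (l : seq T) (v : T) : nat := find (peqb v) l.

Lemma nth_map_position T R (f : T -> R) d (l : seq T) v :
  List.In v l -> nth d (map f l) (position l v) = f v.
Proof.
elim: l => [|x l IH] //= vl; rewrite /position /= /peqb.
case: excluded_middle_informative => [vx|vx] /=; first by rewrite vx.
by case: vl => [xv|]; [case: vx | apply: IH].
Qed.

Lemma nth_map_pred T R (Z : R -> Prop) (f : T -> R) d (l : seq T) n :
  (forall x, Z (f x)) -> Z d -> Z (nth d (map f l) n).
Proof. by move=> Zf Zd; elim: l n => [|x l IH] [|n] //=. Qed.

Section FreeAlgebra.
Variables (E : term nat -> term nat -> Prop) (z : term void) (Hpointed : pointed E z).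
Variables (A : algebra) (S : Type) (eta : S -> A) (Hfree : is_free E eta).
Variables (P Q : S -> Prop) (X Y : A -> Prop) (HX : is_subalg X) (HY : is_subalg Y).
Hypotheses (HXg : forall a, X a <-> generated_by eta P a)
           (HYg : forall a, Y a <-> generated_by eta Q a).

Lemma X_eta (p : {s | P s}) : X (eta (sval p)).
Proof. by apply/HXg; apply: generated_by_gen (svalP _). Qed.

Lemma Y_eta (q : {s | Q s}) : Y (eta (sval q)).
Proof. by apply/HYg; apply: generated_by_gen (svalP _). Qed.

(* Generators of A + X + Y; a generator of X and one of A coming from the same
   element of S are different variables. *)
Definition gvar : Type := ((S + {s | P s}) + {s | Q s})%type.

Definition gen_val (v : gvar) : A :=
  match v with
  | inl (inl s) => eta s
  | inl (inr p) => eta (sval p)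
  | inr q => eta (sval q)
  end.

Section Coproduct.
Variables (K : algebra) (kA : A -> K) (kX : subalg HX -> K) (kY : subalg HY -> K).
Hypothesis cK : is_coprod3 E kA kX kY.

Definition gen_env (v : gvar) : K :=
  match v with
  | inl (inl s) => kA (eta s)
  | inl (inr p) => kX (exist _ _ (X_eta p))
  | inr q => kY (exist _ _ (Y_eta q))
  end.

Lemma coprod3_gen_range k : range gen_env k.
Proof.
have [_ hA hX hY _] := cK.
have Rsub := @is_subalg_range K gvar gen_env.
apply: (coprod3_subalg_full cK Rsub) => [a|x|y].
- have [t <-] := free_range Hfree a.
  exists (rename (fun s => inl (inl s)) t).
  by rewrite eval_rename hom_eval.
- apply: (generated_subalg_full HXg (is_subalg_preim hX Rsub)) => s Xs Ps.
  exists (Var ar (inl (inr (exist _ s Ps)))).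
  by congr kX; apply: sval_inj.
- apply: (generated_subalg_full HYg (is_subalg_preim hY Rsub)) => s Ys Qs.
  exists (Var ar (inr (exist _ s Qs))).
  by congr kY; apply: sval_inj.
Qed.

(* Commutator terms have nat-indexed variables while gvar may be uncountable:
   a variable is numbered by its position in the variable list l of the term,
   so distinct variables of the term get distinct names. *)
Definition cvar_of (l : seq gvar) (v : gvar) : cvar :=
  match v with
  | inl (inl _) => Wv (position l v)
  | inl (inr _) => Xv (position l v)
  | inr _ => Yv (position l v)
  end.

Definition gen_valX (v : gvar) : A :=
  if v is inl (inr p) then eta (sval p) else zero z A.

Definition gen_valY (v : gvar) : A :=
  if v is inr q then eta (sval q) else zero z A.

Definition cvar_env (l : seq gvar) (c : cvar) : A :=
  match c with
  | Wv n => nth (zero z A) (map gen_val l) n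
  | Xv n => nth (zero z A) (map gen_valX l) n
  | Yv n => nth (zero z A) (map gen_valY l) n
  end.

Lemma cvar_env_of l v : List.In v l -> cvar_env l (cvar_of l v) = gen_val v.
Proof. by case: v => [[s|p]|q] /= vl; rewrite nth_map_position. Qed.

Lemma cvar_env_X l n : X (cvar_env l (Xv n)).
Proof.
apply: nth_map_pred; last exact: subalg_closed_term.
by case=> [[s|p]|q] /=; [apply: subalg_closed_term | apply: X_eta | apply: subalg_closed_term].
Qed.

Lemma cvar_env_Y l n : Y (cvar_env l (Yv n)).
Proof.
apply: nth_map_pred; last exact: subalg_closed_term.
by case=> [[s|p]|q] /=; [apply: subalg_closed_term | apply: subalg_closed_term | apply: Y_eta].
Qed.

Variables (t : term gvar) (l : seq gvar).

Lemma renamed_vanish_X (M : algebra) (mA : A -> M) (mY : subalg HY -> M) :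
  is_coprod2 E mA mY ->
  (forall g : K -> M, is_hom g -> (forall x, g (kA x) = mA x) ->
     (forall x, g (kX x) = zero z M) -> (forall y, g (kY y) = mY y) ->
     g (eval gen_env t) = zero z M) ->
  forall B : algebra, models E B -> forall env : cvar -> B,
  (forall n, env (Xv n) = zero z B) -> eval env (rename (cvar_of l) t) = zero z B.
Proof.
move=> cM gker B HB env envX.
have [_ _ _ _ univ] := cK; have [HM hmA hmY _] := cM.
have [g [hg g1 g2 g3 _]] := univ M HM mA _ mY hmA (hom_cst_zero Hpointed HM) hmY.
have [phi [hphi p1 p2]] := free_coprod2_lift Hfree cM HB
  (fun s => env (cvar_of l (inl (inl s)))) (fun q => env (cvar_of l (inr q))).
rewrite eval_rename -(hom_zero z hphi) -(gker g hg g1 g2 g3) !hom_eval //.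
apply: eq_eval => -[[s|p]|q] /=.
- by rewrite g1 p1.
- by rewrite g2 hom_zero // envX.
- by rewrite g3 p2.
Qed.

Lemma renamed_vanish_Y (L : algebra) (lA : A -> L) (lX : subalg HX -> L) :
  is_coprod2 E lA lX ->
  (forall f : K -> L, is_hom f -> (forall x, f (kA x) = lA x) ->
     (forall x, f (kX x) = lX x) -> (forall y, f (kY y) = zero z L) ->
     f (eval gen_env t) = zero z L) ->
  forall B : algebra, models E B -> forall env : cvar -> B,
  (forall n, env (Yv n) = zero z B) -> eval env (rename (cvar_of l) t) = zero z B.
Proof.
move=> cL fker B HB env envY.
have [_ _ _ _ univ] := cK; have [HL hlA hlX _] := cL.
have [f [hf f1 f2 f3 _]] := univ L HL lA lX _ hlA hlX (hom_cst_zero Hpointed HL).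
have [phi [hphi p1 p2]] := free_coprod2_lift Hfree cL HB
  (fun s => env (cvar_of l (inl (inl s)))) (fun p => env (cvar_of l (inl (inr p)))).
rewrite eval_rename -(hom_zero z hphi) -(fker f hf f1 f2 f3) !hom_eval //.
apply: eq_eval => -[[s|p]|q] /=.
- by rewrite f1 p1.
- by rewrite f2 p2.
- by rewrite f3 hom_zero // envY.
Qed.

End Coproduct.

Lemma comm1_sub_commC_free
    (K : algebra) (kA : A -> K) (kX : subalg HX -> K) (kY : subalg HY -> K)
    (L : algebra) (lA : A -> L) (lX : subalg HX -> L)
    (M : algebra) (mA : A -> M) (mY : subalg HY -> M) :
  is_coprod3 E kA kX kY -> is_coprod2 E lA lX -> is_coprod2 E mA mY ->
  forall a, comm1 z kA kX kY lA lX mA mY a -> commC E z X Y a.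
Proof.
move=> cK cL cM a [k [fker gker hk]].
have [t et] := coprod3_gen_range cK k; subst k.
exists (rename (cvar_of (vars t)) t), (cvar_env (vars t)).
split=> [B HB env|n|n|]; [split | exact: cvar_env_X | exact: cvar_env_Y |].
- exact: renamed_vanish_X cM gker B HB env.
- exact: renamed_vanish_Y cL fker B HB env.
have [_ _ _ _ univ] := cK.
have [h [hh h1 h2 h3 _]] := univ A (proj1 Hfree) id (@sval _ _) (@sval _ _)
  (fun _ _ => erefl) (fun _ _ => erefl) (fun _ _ => erefl).
rewrite -(hk h hh h1 h2 h3) eval_rename hom_eval //.
apply: eq_eval_in => v vt; rewrite cvar_env_of //.
by case: v {vt} => [[s|p]|q] /=; rewrite ?h1 ?h2 ?h3.
Qed.

End FreeAlgebra.
End Signature.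

Theorem proposition7p5 (O : Type) (ar : O -> nat)
  (E : term ar nat -> term ar nat -> Prop) (z : term ar void)
  (Hpointed : pointed E z)
  (A : algebra ar) (HA : models E A)
  (X Y : A -> Prop) (HX : is_subalg X) (HY : is_subalg Y) :
  (* (a) *)
  (forall (K : algebra ar) (kA : A -> K) (kX : subalg HX -> K)
          (kY : subalg HY -> K)
          (L : algebra ar) (lA : A -> L) (lX : subalg HX -> L)
          (M : algebra ar) (mA : A -> M) (mY : subalg HY -> M),
     is_coprod3 E kA kX kY -> is_coprod2 E lA lX -> is_coprod2 E mA mY ->
     forall a : A, @commC O ar E z A X Y a -> @comm1 O ar z A X Y HX HY K kA kX kY L lA lX M mA mY a)
  /\
  (* (b) *)
  (forall (S : Type) (eta : S -> A), is_free E eta ->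
   forall P Q : S -> Prop, (forall s, P s -> Q s -> False) ->
   (forall a, X a <-> generated_by eta P a) ->
   (forall a, Y a <-> generated_by eta Q a) ->
   forall (K : algebra ar) (kA : A -> K) (kX : subalg HX -> K)
          (kY : subalg HY -> K)
          (L : algebra ar) (lA : A -> L) (lX : subalg HX -> L)
          (M : algebra ar) (mA : A -> M) (mY : subalg HY -> M),
     is_coprod3 E kA kX kY -> is_coprod2 E lA lX -> is_coprod2 E mA mY ->
     forall a : A, @commC O ar E z A X Y a <-> @comm1 O ar z A X Y HX HY K kA kX kY L lA lX M mA mY a).
Proof.
split=> [K kA kX kY L lA lX M mA mY _ cL cM|S eta Hfree P Q _ HXg HYg].
  exact: commC_sub_comm1.
move=> K kA kX kY L lA lX M mA mY cK cL cM a.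
split; first exact: commC_sub_comm1.
exact: (comm1_sub_commC_free Hpointed Hfree HXg HYg cK cL cM).
Qed.
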